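(* Let $\mathfrak{g}$ be a finite-dimensional complete Lie algebra over a field $K$ of characteristic zero. Then every CPA-structure on $\mathfrak{g}$ is inner.
   Context: A Lie algebra is complete if its center is trivial and all its derivations are inner. A CPA-structure on $\mathfrak{g}$ is a bilinear product $x\cdot y$ satisfying, for all $x,y,z$: $x\cdot y=y\cdot x$; $[x,y]\cdot z=x\cdot(y\cdot z)-y\cdot(x\cdot z)$; $x\cdot[y,z]=[x\cdot y,z]+[y,x\cdot z]$. It is inner if $x\cdot y=[\phi(x),y]$ for all $x,y$ for some Lie algebra homomorphism $\phi:\mathfrak{g}\to\mathfrak{g}$. *)

From HB Require Import structures.
From mathcomp Require Import all_boot all_order all_algebra.
Set Implicit Arguments. Unset Strict Implicit. Unset Printing Implicit Defensive.
Import GRing.Theory.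
Local Open Scope ring_scope.

(* A finite-dimensional Lie algebra over K is modelled as a finite-dimensional
   K-vector space V (a vectType K) together with a bracket br : V -> V -> V. *)

Section LieDefs.
Variables (K : fieldType) (V : vectType K).

Definition is_linear_map (f : V -> V) : Prop :=
  forall (a : K) (x y : V), f (a *: x + y) = a *: f x + f y.

Definition is_bilinear (m : V -> V -> V) : Prop :=
  (forall (a : K) (x y z : V), m (a *: x + y) z = a *: m x z + m y z) /\
  (forall (a : K) (x y z : V), m z (a *: x + y) = a *: m z x + m z y).

Definition is_lie_bracket (br : V -> V -> V) : Prop :=
  [/\ is_bilinear br,
      (forall x : V, br x x = 0) &
      (forall x y z : V, br x (br y z) + br y (br z x) + br z (br x y) = 0)].

Definition trivial_center (br : V -> V -> V) : Prop :=
  forall z : V, (forall x : V, br z x = 0) -> z = 0.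

Definition is_derivation (br : V -> V -> V) (D : V -> V) : Prop :=
  is_linear_map D /\ forall x y : V, D (br x y) = br (D x) y + br x (D y).

Definition is_inner_derivation (br : V -> V -> V) (D : V -> V) : Prop :=
  exists a : V, forall x : V, D x = br a x.

Definition complete_lie (br : V -> V -> V) : Prop :=
  trivial_center br /\
  forall D : V -> V, is_derivation br D -> is_inner_derivation br D.

Definition is_lie_hom (br : V -> V -> V) (phi : V -> V) : Prop :=
  is_linear_map phi /\ forall x y : V, phi (br x y) = br (phi x) (phi y).

Definition is_CPA (br : V -> V -> V) (p : V -> V -> V) : Prop :=
  [/\ is_bilinear p,
      (forall x y : V, p x y = p y x),
      (forall x y z : V, p (br x y) z = p x (p y z) - p y (p x z)) &
      (forall x y z : V, p x (br y z) = br (p x y) z + br y (p x z))].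

Definition is_inner_CPA (br : V -> V -> V) (p : V -> V -> V) : Prop :=
  exists phi : V -> V, is_lie_hom br phi /\ forall x y : V, p x y = br (phi x) y.

End LieDefs.

(* For each x the operator p x is a derivation, so completeness writes it as
   ad (phi x) for a unique phi x (uniqueness being the trivial center).
   Linearity of p in x then forces linearity of phi, and the CPA identity
   [x,y].z = x.(y.z) - y.(x.z) together with the Jacobi identity gives
   ad (phi [x,y]) = ad [phi x, phi y], hence phi is a Lie homomorphism. *)

From mathcomp Require Import all_boot all_order all_algebra.
From Stdlib Require Import ClassicalEpsilon.
Set Implicit Arguments. Unset Strict Implicit. Unset Printing Implicit Defensive.
Local Open Scope ring_scope.
Import GRing.Theory.

Section Bilinear.
Variables (K : fieldType) (V : vectType K) (m : V -> V -> V).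
Hypothesis m_bilin : is_bilinear m.

Lemma bilin0l w : m 0 w = 0.
Proof. by have := m_bilin.1 (-1) 0 0 w; rewrite scaler0 addr0 scaleN1r addNr. Qed.

Lemma bilinDl u v w : m (u + v) w = m u w + m v w.
Proof. by have := m_bilin.1 1 u v w; rewrite !scale1r. Qed.

Lemma bilinDr u v w : m w (u + v) = m w u + m w v.
Proof. by have := m_bilin.2 1 u v w; rewrite !scale1r. Qed.

Lemma bilinZl a u w : m (a *: u) w = a *: m u w.
Proof. by have := m_bilin.1 a u 0 w; rewrite addr0 bilin0l addr0. Qed.

Lemma bilinNl u w : m (- u) w = - m u w.
Proof. by rewrite -scaleN1r bilinZl scaleN1r. Qed.

Lemma bilinBl u v w : m (u - v) w = m u w - m v w.
Proof. by rewrite bilinDl bilinNl. Qed.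

End Bilinear.

Section LieBracket.
Variables (K : fieldType) (V : vectType K) (br : V -> V -> V).
Hypothesis br_lie : is_lie_bracket br.

Let br_bilin : is_bilinear br. Proof. by case: br_lie. Qed.

Lemma lie_anticomm u v : br u v = - br v u.
Proof.
case: br_lie => _ alt _; have := alt (u + v).
rewrite (bilinDl br_bilin) !(bilinDr br_bilin) !alt add0r addr0 => /eqP.
by rewrite addr_eq0 => /eqP.
Qed.

Lemma lie_bracketNr u w : br w (- u) = - br w u.
Proof. by rewrite lie_anticomm (bilinNl br_bilin) -lie_anticomm. Qed.

(* The Jacobi identity, read as: ad is a Lie homomorphism. *)
Lemma ad_bracket a b z : br (br a b) z = br a (br b z) - br b (br a z).
Proof.
case: br_lie => _ _ jac; have := jac a b z.
rewrite [br z (br a b)]lie_anticomm [br z a]lie_anticomm lie_bracketNr.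
by move/eqP; rewrite subr_eq0 => /eqP.
Qed.

Lemma trivial_center_ad_inj a b :
  trivial_center br -> (forall y, br a y = br b y) -> a = b.
Proof.
move=> center eq_ad; apply/eqP; rewrite -subr_eq0; apply/eqP.
by apply: center => y; rewrite (bilinBl br_bilin) eq_ad subrr.
Qed.

Lemma complete_ad_choice (D : V -> V -> V) :
  complete_lie br -> (forall x, is_derivation br (D x)) ->
  exists phi : V -> V, forall x y, D x y = br (phi x) y.
Proof.
case=> _ inner derD; apply: (choice (fun x a => forall y, D x y = br a y)).
by move=> x; exact: inner (derD x).
Qed.

End LieBracket.

Lemma CPA_mul_derivation (K : fieldType) (V : vectType K) (br p : V -> V -> V) :
  is_CPA br p -> forall x, is_derivation br (p x).
Proof. by case=> p_bilin _ _ p_der x; split=> [a y z|]; [exact: p_bilin.2 | exact: p_der]. Qed.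

Theorem corollary2p9 (K : fieldType) (V : vectType K) (br : V -> V -> V)
  (charK : [pchar K] =i pred0)
  (Hlie : is_lie_bracket br) (Hcomplete : complete_lie br)
  (p : V -> V -> V) (Hp : is_CPA br p) :
  is_inner_CPA br p.
Proof.
have [phi p_ad] := complete_ad_choice Hcomplete (CPA_mul_derivation Hp).
have br_bilin : is_bilinear br by case: Hlie.
have ad_inj := trivial_center_ad_inj Hlie Hcomplete.1.
case: Hp => p_bilin _ p_bracket _.
exists phi; split=> //; split=> [a x y | x y]; apply: ad_inj => z.
- by rewrite -p_ad p_bilin.1 !p_ad (bilinDl br_bilin) (bilinZl br_bilin).
- by rewrite -p_ad p_bracket !p_ad ad_bracket.
Qed.
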